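(* Let $G=(U\sqcup V,E)$ be a bipartite graph with $U=\{u_1,\ldots,u_n\}$, $V=\{v_1,\ldots,v_s\}$, $n\ge s$, and integer weights $w:E\to\mathbb{Z}$, and let $k\in\mathbb{Z}$. Let $U'=\{u'_1,\ldots,u'_n\}$ and $V'=\{v'_1,\ldots,v'_s\}$ be new vertices, and let $G_s$ be the bipartite graph with bipartition classes $U\sqcup V'$ and $V\sqcup U'$ and edge set $E\cup E_f\cup E_U$, where $E_f=\{v'_ju'_i:\ u_iv_j\in E\}$ and $E_U=\{u_iu'_i:\ 1\le i\le n\}$. Define $w_s$ by $w_s(e)=w(e)$ for $e\in E$, $w_s(v'_ju'_i)=w(u_iv_j)$ for $v'_ju'_i\in E_f$, and $w_s(e)=k$ for $e\in E_U$. If $N$ is a minimum weight perfect matching of $\{G_s,w_s\}$, then $M=N\cap E$ is an optimum matching of $\{G,w\}$ which covers $V$.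
   Context: A matching is a set of pairwise vertex-disjoint edges; it is perfect if it covers all vertices. For a weight function $c$, the weight of a matching $M$ is $\sum_{e\in M}c(e)$; a minimum weight perfect matching is a perfect matching of minimum weight among all perfect matchings. An optimum matching of $\{G,w\}$ is a matching of maximum cardinality in $G$ whose weight is minimum among all maximum cardinality matchings of $G$. *)

From mathcomp Require Import all_boot all_order all_algebra.
Set Implicit Arguments. Unset Strict Implicit. Unset Printing Implicit Defensive.
Import Order.TTheory GRing.Theory Num.Theory.
Local Open Scope ring_scope.

(* A bipartite graph with classes L and R is given by an edge relation
   E : L -> R -> bool; an edge is represented by the pair (l, r).
   Weights are c : L -> R -> int (only their values on edges matter). *)

Definition is_matching (L R : finType) (E : L -> R -> bool) (M : {set L * R}) : bool :=
  [forall p in M, E p.1 p.2] &&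
  [forall p in M, forall q in M, ((p.1 == q.1) || (p.2 == q.2)) ==> (p == q)].

Definition is_perfect_matching (L R : finType) (E : L -> R -> bool) (M : {set L * R}) : bool :=
  [&& is_matching E M,
      [forall l : L, exists r : R, (l, r) \in M] &
      [forall r : R, exists l : L, (l, r) \in M]].

Definition mweight (L R : finType) (c : L -> R -> int) (M : {set L * R}) : int :=
  \sum_(p in M) c p.1 p.2.

Definition min_weight_perfect_matching (L R : finType) (E : L -> R -> bool)
  (c : L -> R -> int) (N : {set L * R}) : Prop :=
  is_perfect_matching E N /\
  forall N' : {set L * R}, is_perfect_matching E N' -> mweight c N <= mweight c N'.

Definition optimum_matching (L R : finType) (E : L -> R -> bool)
  (c : L -> R -> int) (M : {set L * R}) : Prop :=
  [/\ is_matching E M,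
      (forall M' : {set L * R}, is_matching E M' -> (#|M'| <= #|M|)%N) &
      (forall M' : {set L * R}, is_matching E M' -> #|M'| = #|M| ->
         mweight c M <= mweight c M')].

Definition covers_right (L R : finType) (M : {set L * R}) : bool :=
  [forall r : R, exists l : L, (l, r) \in M].

(* The graph G_s: left class U ⊔ V' = 'I_n + 'I_s, right class V ⊔ U' = 'I_s + 'I_n.
   inl i (left) = u_i, inr j (left) = v'_j, inl j (right) = v_j, inr i (right) = u'_i. *)
Definition Gs_edge (n s : nat) (E : 'I_n -> 'I_s -> bool)
  (a : 'I_n + 'I_s) (b : 'I_s + 'I_n) : bool :=
  match a, b with
  | inl i, inl j => E i j
  | inr j, inr i => E i j
  | inl i, inr i' => i == i'
  | inr _, inl _ => false
  end.

Definition Gs_weight (n s : nat) (w : 'I_n -> 'I_s -> int) (k : int)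
  (a : 'I_n + 'I_s) (b : 'I_s + 'I_n) : int :=
  match a, b with
  | inl i, inl j => w i j
  | inr j, inr i => w i j
  | inl _, inr _ => k
  | inr _, inl _ => 0
  end.

Definition restrict_to_G (n s : nat) (N : {set ('I_n + 'I_s) * ('I_s + 'I_n)})
  : {set 'I_n * 'I_s} :=
  [set p : 'I_n * 'I_s | (inl p.1, inl p.2) \in N].

From mathcomp Require Import all_boot all_order all_algebra.
From mathcomp Require Import zify.
Import Order.TTheory GRing.Theory Num.Theory.
Local Open Scope ring_scope.

(* A perfect matching N of G_s splits into M = N ∩ E, the copy F ⊆ E of N ∩ E_f,
   and the edges u_i u'_i at the vertices of U exposed by M.  Each v_j (resp. v'_j)
   can only be matched through E (resp. E_f), so M and F are matchings of G covering
   V, hence of size s, and w_s(N) = w(M) + w(F) + k(n - s).  Conversely a matching A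
   of G covering V doubles to a perfect matching of G_s of weight 2 w(A) + k(n - s).
   Testing the minimality of N against the doubles of M and F gives w(M) = w(F), and
   then w(M) <= w(A) for every A covering V.  As no matching of G has more than s
   edges, and those with s edges are exactly those covering V, M is optimum. *)

Section Matchings.
Context {A B : finType} {e : A -> B -> bool}.
Implicit Type M : {set A * B}.

Definition covers_left M : bool := [forall a : A, exists b : B, (a, b) \in M].

Lemma perfect_matchingE M :
  is_perfect_matching e M = [&& is_matching e M, covers_left M & covers_right M].
Proof. by []. Qed.

Lemma covers_rightP M : reflect (forall b, exists a, (a, b) \in M) (covers_right M).
Proof. by apply: (iffP forallP) => cov b; apply/existsP; apply: cov. Qed.

Lemma covers_leftP M : reflect (forall a, exists b, (a, b) \in M) (covers_left M).
Proof. by apply: (iffP forallP) => cov a; apply/existsP; apply: cov. Qed.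

Lemma matchingP M :
  reflect [/\ {in M, forall p, e p.1 p.2}, {in M &, injective fst}
            & {in M &, injective snd}]
          (is_matching e M).
Proof.
apply: (iffP andP) => [[/forall_inP edge /forall_inP uniq] | [edge inj1 inj2]].
  split=> // p q Mp Mq eq_pq; apply/eqP;
    by have /forall_inP/(_ q Mq) := uniq p Mp; rewrite eq_pq eqxx ?orbT.
split; first exact/forall_inP.
apply/forall_inP=> p Mp; apply/forall_inP=> q Mq; apply/implyP.
by case/orP=> /eqP eq_pq; apply/eqP; [apply: inj1 | apply: inj2].
Qed.

Context {M : {set A * B}} (matchM : is_matching e M).

Lemma card_matching_fst : #|[set p.1 | p in M]| = #|M|.
Proof. by case/matchingP: matchM => _ inj1 _; apply: card_in_imset. Qed.

Lemma card_matching_snd : #|[set p.2 | p in M]| = #|M|.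
Proof. by case/matchingP: matchM => _ _ inj2; apply: card_in_imset. Qed.

Lemma card_matching_le : (#|M| <= #|B|)%N.
Proof. by rewrite -card_matching_snd max_card. Qed.

Lemma card_unmatched_left : #|~: [set p.1 | p in M]| = (#|A| - #|M|)%N.
Proof. by rewrite cardsCs setCK card_matching_fst. Qed.

Lemma covers_right_card : covers_right M = (#|M| == #|B|).
Proof.
have -> : covers_right M = ([set: B] \subset [set p.2 | p in M]).
  apply/covers_rightP/subsetP => [cov b _ | cov b].
    by have [a Mab] := cov b; apply/imsetP; exists (a, b).
  by have /imsetP[[a b'] Mab /= ->] := cov b (in_setT b); exists a.
by rewrite subTset eqEcard subsetT cardsT -card_matching_snd eqn_leq max_card.
Qed.

Lemma card_matching_covers_right : covers_right M -> #|M| = #|B|.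
Proof. by rewrite covers_right_card => /eqP. Qed.

End Matchings.

Lemma mweightE (A B : finType) (c : A -> B -> int) (M : {set A * B}) :
  mweight c M = \sum_a \sum_b (if (a, b) \in M then c a b else 0).
Proof. by rewrite /mweight big_mkcond pair_bigA; apply: eq_bigr => -[a b]. Qed.

Section Gs.
Context {n s : nat} {E : 'I_n -> 'I_s -> bool} {w : 'I_n -> 'I_s -> int} {k : int}.
Local Notation L := ('I_n + 'I_s)%type.
Local Notation R := ('I_s + 'I_n)%type.
Implicit Type N : {set L * R}.

Definition restrict_to_Ef N : {set 'I_n * 'I_s} := [set p | (inr p.2, inr p.1) \in N].
Definition restrict_to_EU N : {set 'I_n} := [set i | (inl i, inr i) \in N].

Lemma Gs_mweightE N : {in N, forall p, Gs_edge E p.1 p.2} ->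
  mweight (Gs_weight w k) N =
  mweight w (restrict_to_G N) + mweight w (restrict_to_Ef N) + k *+ #|restrict_to_EU N|.
Proof.
move=> edgeN; rewrite mweightE big_sumType /=.
under eq_bigr => i _ do rewrite big_sumType.
under [X in _ + X]eq_bigr => j _ do rewrite big_sumType.
rewrite !big_split /=.
have off_edge a b : ~~ Gs_edge E a b ->
    (if (a, b) \in N then Gs_weight w k a b else 0) = 0.
  by move=> not_ab; case: ifP => // /edgeN; rewrite (negbTE not_ab).
have -> : \sum_j \sum_i (if (inr j, inl i) \in N then Gs_weight w k (inr j) (inl i) else 0) = 0.
  by apply: big1 => j _; apply: big1 => i _; apply: off_edge.
have -> : \sum_i \sum_i' (if (inl i, inr i') \in N then Gs_weight w k (inl i) (inr i') else 0)
          = k *+ #|restrict_to_EU N|.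
  rewrite -sumr_const [RHS]big_mkcond; apply: eq_bigr => i _.
  rewrite (bigD1 i) //= big1 ?addr0 ?inE // => i' ne_i'i.
  by apply: off_edge; rewrite /= eq_sym.
rewrite add0r [X in _ + X]exchange_big addrAC !mweightE.
by congr (_ + _ + _); apply: eq_bigr => i _; apply: eq_bigr => j _; rewrite inE.
Qed.

Section PerfectMatchingOfGs.
Context {N : {set L * R}} (perfN : is_perfect_matching (Gs_edge E) N).

Lemma restrict_to_G_matching : is_matching E (restrict_to_G N).
Proof.
have /and3P[/matchingP[edgeN inj1 inj2] _ _] := perfN.
apply/matchingP; split=> [[i j] | [i j] [i' j'] | [i j] [i' j']]; rewrite !inE //=.
- exact: edgeN.
- by move=> Nij Nij' eq_ii'; subst i'; case: (inj1 _ _ Nij Nij' erefl) => ->.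
- by move=> Nij Nij' eq_jj'; subst j'; case: (inj2 _ _ Nij Nij' erefl) => ->.
Qed.

Lemma restrict_to_Ef_matching : is_matching E (restrict_to_Ef N).
Proof.
have /and3P[/matchingP[edgeN inj1 inj2] _ _] := perfN.
apply/matchingP; split=> [[i j] | [i j] [i' j'] | [i j] [i' j']]; rewrite !inE //=.
- exact: edgeN.
- by move=> Nij Nij' eq_ii'; subst i'; case: (inj2 _ _ Nij Nij' erefl) => ->.
- by move=> Nij Nij' eq_jj'; subst j'; case: (inj1 _ _ Nij Nij' erefl) => ->.
Qed.

Lemma restrict_to_G_covers_right : covers_right (restrict_to_G N).
Proof.
have /and3P[/matchingP[edgeN _ _] _ /covers_rightP covN] := perfN.
apply/covers_rightP => j; have [[i | j'] Nj] := covN (inl j).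
  by exists i; rewrite inE.
by have := edgeN _ Nj.
Qed.

Lemma restrict_to_Ef_covers_right : covers_right (restrict_to_Ef N).
Proof.
have /and3P[/matchingP[edgeN _ _] /covers_leftP covN _] := perfN.
apply/covers_rightP => j; have [[j' | i] Nj] := covN (inr j).
  by have := edgeN _ Nj.
by exists i; rewrite inE.
Qed.

Lemma restrict_to_EU_unmatched :
  restrict_to_EU N = ~: [set p.1 | p in restrict_to_G N].
Proof.
have /and3P[/matchingP[edgeN inj1 _] /covers_leftP covN _] := perfN.
apply/setP => i; rewrite !inE; apply/idP/negP => [Nii /imsetP[[i' j] Nij /= eq_i] | no_j].
  by subst i; rewrite inE in Nij; have := inj1 _ _ Nii Nij erefl.
have [[j | i'] Ni] := covN (inl i).
  by case: no_j; apply/imsetP; exists (i, j); rewrite ?inE.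
by have /eqP eq_ii' := edgeN _ Ni; subst i'.
Qed.

Lemma Gs_perfect_mweight :
  mweight (Gs_weight w k) N =
  mweight w (restrict_to_G N) + mweight w (restrict_to_Ef N) + k *+ (n - s).
Proof.
have /and3P[/matchingP[edgeN _ _] _ _] := perfN.
have matchM := restrict_to_G_matching.
have cardM := card_matching_covers_right matchM restrict_to_G_covers_right.
by rewrite Gs_mweightE // restrict_to_EU_unmatched (card_unmatched_left matchM) cardM !card_ord.
Qed.

End PerfectMatchingOfGs.

Definition Gs_double (A : {set 'I_n * 'I_s}) : {set L * R} :=
  [set p : L * R | match p with
     | (inl i, inl j) | (inr j, inr i) => (i, j) \in A
     | (inl i, inr i') => (i == i') && (i \notin [set q.1 | q in A])
     | (inr _, inl _) => false
     end].

Section Doubling.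
Context {A : {set 'I_n * 'I_s}} (matchA : is_matching E A) (covA : covers_right A).

Lemma Gs_double_matching : is_matching (Gs_edge E) (Gs_double A).
Proof.
have /matchingP[edgeA inj1 inj2] := matchA.
have matched i j : (i, j) \in A -> i \in [set q.1 | q in A].
  by move=> Aij; apply/imsetP; exists (i, j).
apply/matchingP; split.
- by move=> [[i | j] [j' | i']]; rewrite inE //=; [apply: edgeA | case/andP | apply: edgeA].
- move=> [a b] [a' b']; rewrite !inE /= => + + eq_aa'; subst a'.
  case: a => [i | j]; case: b => [j1 | i1]; case: b' => [j2 | i2] //=.
  + by move=> Aij Aij'; case: (inj1 _ _ Aij Aij' erefl) => ->.
  + by move=> /matched -> /andP[].
  + by move=> /andP[_ /negP unmatched] /matched.
  + by move=> /andP[/eqP <- _] /andP[/eqP <- _].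
  + by move=> Aij Aij'; case: (inj2 _ _ Aij Aij' erefl) => ->.
- move=> [a b] [a' b']; rewrite !inE /= => + + eq_bb'; subst b'.
  case: b => [j | i]; case: a => [i1 | j1]; case: a' => [i2 | j2] //=.
  + by move=> Aij Aij'; case: (inj2 _ _ Aij Aij' erefl) => ->.
  + by move=> /andP[/eqP <- _] /andP[/eqP <- _].
  + by move=> /andP[/eqP eq_i1 /negP unmatched]; subst i1 => /matched.
  + by move=> /matched + /andP[/eqP eq_i2 /negP unmatched]; subst i2.
  + by move=> Aij Aij'; case: (inj1 _ _ Aij Aij' erefl) => ->.
Qed.

Lemma Gs_double_perfect : is_perfect_matching (Gs_edge E) (Gs_double A).
Proof.
have /covers_rightP covA' := covA.
have partner i : exists b, (inl i, b) \in Gs_double A.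
  have [/imsetP[[i' j] Aij /= eq_i] | unmatched] := boolP (i \in [set q.1 | q in A]).
    by subst i'; exists (inl j); rewrite inE.
  by exists (inr i); rewrite inE /= eqxx.
rewrite perfect_matchingE Gs_double_matching; apply/and3P; split=> //.
- apply/covers_leftP => -[i | j]; first exact: partner.
  by have [i Aij] := covA' j; exists (inr i); rewrite inE.
- apply/covers_rightP => -[j | i].
    by have [i Aij] := covA' j; exists (inl i); rewrite inE.
  have [[j | i'] Di] := partner i; first by exists (inr j); rewrite !inE in Di *.
  by exists (inl i); rewrite !inE /= in Di *; rewrite eqxx; case/andP: Di.
Qed.

Lemma Gs_double_mweight :
  mweight (Gs_weight w k) (Gs_double A) = mweight w A + mweight w A + k *+ (n - s).
Proof.
have /matchingP[edgeD _ _] := Gs_double_matching.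
rewrite Gs_mweightE //.
have -> : restrict_to_EU (Gs_double A) = ~: [set q.1 | q in A].
  by apply/setP => i; rewrite !inE eqxx.
have -> : restrict_to_G (Gs_double A) = A by apply/setP => -[i j]; rewrite !inE.
have -> : restrict_to_Ef (Gs_double A) = A by apply/setP => -[i j]; rewrite !inE.
by rewrite (card_unmatched_left matchA) (card_matching_covers_right matchA covA) !card_ord.
Qed.

End Doubling.

Lemma min_weight_perfect_mweight_le {N} :
  min_weight_perfect_matching (Gs_edge E) (Gs_weight w k) N ->
  forall A, is_matching E A -> covers_right A ->
  mweight w (restrict_to_G N) + mweight w (restrict_to_Ef N) <= mweight w A + mweight w A.
Proof.
move=> [perfN minN] A matchA covA.
have := minN _ (Gs_double_perfect matchA covA).
by rewrite (Gs_perfect_mweight perfN) Gs_double_mweight // lerD2r.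
Qed.

End Gs.

Theorem proposition4p3 (n s : nat) (E : 'I_n -> 'I_s -> bool)
  (w : 'I_n -> 'I_s -> int) (k : int)
  (N : {set ('I_n + 'I_s) * ('I_s + 'I_n)}) :
  (s <= n)%N ->
  min_weight_perfect_matching (Gs_edge E) (Gs_weight w k) N ->
  optimum_matching E w (restrict_to_G N) /\ covers_right (restrict_to_G N).
Proof.
move=> _ minN; have [perfN _] := minN.
have matchM := restrict_to_G_matching perfN.
have covM := restrict_to_G_covers_right perfN.
have cardM := card_matching_covers_right matchM covM.
have le_double := min_weight_perfect_mweight_le minN.
have leFM := le_double _ matchM covM.
have leMF := le_double _ (restrict_to_Ef_matching perfN) (restrict_to_Ef_covers_right perfN).
split=> //; split=> // [M' matchM' | M' matchM' cardM'].
  by rewrite cardM (card_matching_le matchM').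
have covM' : covers_right M' by rewrite (covers_right_card matchM') cardM' cardM.
have := le_double _ matchM' covM'; lia.
Qed.
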